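(* Let $\{x_k\}_{k\in[n]}$ be unit vectors in $\mathbb{H}^d$ and let $S(x_k)=\{x_kzx_k^*:z\in\mathbb{H},\operatorname{Re}z=0\}$, a $3$-dimensional real subspace of the real vector space $\mathcal{A}_d$ of $d\times d$ quaternionic anti-Hermitian matrices (which has dimension $d(2d+1)$), equipped with $\langle A,B\rangle=\operatorname{Re}\operatorname{tr}(A^*B)$. (a) If $\{x_k\}_{k\in[n]}$ is equiangular, then $\{S(x_k)\}_{k\in[n]}$ is equi-isoclinic. (b) If $\{x_k\}_{k\in[n]}$ is a projective $2$-design for $\mathbb{H}^d$, then $\{S(x_k)\}_{k\in[n]}$ is a tight fusion frame for $\mathcal{A}_d$.
   Context: $\mathbb{H}$ is the quaternions; $x^*$ is conjugate transpose; unit means $x^*x=1$. On $\mathbb{H}^{d\times d}$ use the real inner product $\langle A,B\rangle=\operatorname{Re}\operatorname{tr}(A^*B)$. Unit vectors $\{x_k\}$ are equiangular if $|x_k^*x_\ell|^2$ takes the same value for all $k\neq\ell$. They form a projective $2$-design for $\mathbb{H}^d$ if $\frac{1}{n^2}\sum_{k,\ell}\langle x_kx_k^*,x_\ell x_\ell^*\rangle=\frac{1}{d}$ and $\frac{1}{n^2}\sum_{k,\ell}\langle x_kx_k^*,x_\ell x_\ell^*\rangle^2=\frac{3}{d(2d+1)}$. For $r$-dimensional subspaces $\{S_k\}_{k\in[n]}$ of a real inner product space $V$, choose orthonormal bases $\{y_{ki}\}_{i\in[r]}$ of $S_k$ and set $G_{k\ell}=[\langle y_{ki},y_{\ell j}\rangle]_{i,j\in[r]}$.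 The family is equi-isoclinic if there is $\alpha\ge0$ with $G_{k\ell}^*G_{k\ell}=\alpha I_r$ for all $k\ne\ell$; it is a tight fusion frame for $V$ if $\frac{1}{n^2}\sum_{k,\ell}\|G_{k\ell}\|_F^2=\frac{r^2}{\dim V}$. *)

From HB Require Import structures.
From mathcomp Require Import all_boot all_order all_algebra.
From mathcomp Require Import ring.
Set Implicit Arguments. Unset Strict Implicit. Unset Printing Implicit Defensive.
Import Order.TTheory GRing.Theory Num.Theory.
Local Open Scope ring_scope.

Section Quaternions.
Variable R : comNzRingType.

Record quat := Quat { qre : R; qi : R; qj : R; qk : R }.

Definition quat_to4 (q : quat) := ((qre q, qi q), (qj q, qk q)).
Definition quat_of4 (t : (R * R) * (R * R)) := Quat t.1.1 t.1.2 t.2.1 t.2.2.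
Lemma quat_to4K : cancel quat_to4 quat_of4. Proof. by case. Qed.

HB.instance Definition _ := Equality.copy quat (can_type quat_to4K).
HB.instance Definition _ := Choice.copy quat (can_type quat_to4K).

Definition qzero := Quat 0 0 0 0.
Definition qone := Quat 1 0 0 0.
Definition qopp q := Quat (- qre q) (- qi q) (- qj q) (- qk q).
Definition qadd p q :=
  Quat (qre p + qre q) (qi p + qi q) (qj p + qj q) (qk p + qk q).
Definition qmul p q :=
  Quat (qre p * qre q - qi p * qi q - qj p * qj q - qk p * qk q)
       (qre p * qi q + qi p * qre q + qj p * qk q - qk p * qj q)
       (qre p * qj q - qi p * qk q + qj p * qre q + qk p * qi q)
       (qre p * qk q + qi p * qj q - qj p * qi q + qk p * qre q).

Lemma qaddA : associative qadd.
Proof. by move=> [? ? ? ?] [? ? ? ?] [? ? ? ?]; rewrite /qadd /=; congr Quat; ring. Qed.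
Lemma qaddC : commutative qadd.
Proof. by move=> [? ? ? ?] [? ? ? ?]; rewrite /qadd /=; congr Quat; ring. Qed.
Lemma qadd0 : left_id qzero qadd.
Proof. by move=> [? ? ? ?]; rewrite /qadd /=; congr Quat; ring. Qed.
Lemma qaddN : left_inverse qzero qopp qadd.
Proof. by move=> [? ? ? ?]; rewrite /qadd /=; congr Quat; ring. Qed.

HB.instance Definition _ := GRing.isZmodule.Build quat qaddA qaddC qadd0 qaddN.

Lemma qaddE (p q : quat) : p + q = qadd p q. Proof. by []. Qed.

Lemma qmulA : associative qmul.
Proof. by move=> [? ? ? ?] [? ? ? ?] [? ? ? ?]; rewrite /qmul /=; congr Quat; ring. Qed.
Lemma qmul1 : left_id qone qmul.
Proof. by move=> [? ? ? ?]; rewrite /qmul /=; congr Quat; ring. Qed.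
Lemma qmulr1 : right_id qone qmul.
Proof. by move=> [? ? ? ?]; rewrite /qmul /=; congr Quat; ring. Qed.
Lemma qmulDl : left_distributive qmul (@GRing.add quat).
Proof. by move=> [? ? ? ?] [? ? ? ?] [? ? ? ?]; rewrite !qaddE /qmul /= /qadd /=; congr Quat; ring. Qed.
Lemma qmulDr : right_distributive qmul (@GRing.add quat).
Proof. by move=> [? ? ? ?] [? ? ? ?] [? ? ? ?]; rewrite !qaddE /qmul /= /qadd /=; congr Quat; ring. Qed.
Lemma qone_neq0 : qone != (0 : quat).
Proof. by apply/eqP => -[] /eqP; rewrite oner_eq0. Qed.

HB.instance Definition _ :=
  GRing.Zmodule_isNzRing.Build quat qmulA qmul1 qmulr1 qmulDl qmulDr qone_neq0.

Definition qconj q := Quat (qre q) (- qi q) (- qj q) (- qk q).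
Definition qreal (c : R) := Quat c 0 0 0.
Definition qnorm2 q := qre q ^+ 2 + qi q ^+ 2 + qj q ^+ 2 + qk q ^+ 2.

End Quaternions.

Notation "''H[' R ]" := (quat R) (at level 0, format "''H[' R ]").

Section QMatrices.
Variable R : comNzRingType.

Definition qadj m n (A : 'M['H[R]]_(m, n)) : 'M['H[R]]_(n, m) :=
  map_mx (@qconj R) A^T.

Definition qip d (A B : 'M['H[R]]_d) : R := qre (\tr (qadj A *m B)).

Definition qunit d (x : 'cV['H[R]]_d) := qadj x *m x = 1%:M.

Definition q_equiangular n d (x : 'I_n -> 'cV['H[R]]_d) :=
  exists c : R, forall k l : 'I_n, k != l -> qnorm2 ((qadj (x k) *m x l) 0 0) = c.

Definition Sx d (x : 'cV['H[R]]_d) (A : 'M['H[R]]_d) : Prop :=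
  exists z : 'H[R], qre z = 0 /\ A = x *m (z%:M : 'M_1) *m qadj x.

Definition qrscale m n (c : R) (A : 'M['H[R]]_(m, n)) := map_mx (GRing.mul (qreal c)) A.

Definition is_onb d r (S : 'M['H[R]]_d -> Prop) (b : 'I_r -> 'M['H[R]]_d) :=
  [/\ forall i, S (b i),
      forall i j, qip (b i) (b j) = (i == j)%:R &
      forall A, S A -> exists c : 'I_r -> R, A = \sum_i qrscale (c i) (b i)].

Definition gram_blk d n r (y : 'I_n -> 'I_r -> 'M['H[R]]_d) (k l : 'I_n) : 'M[R]_r :=
  \matrix_(i, j) qip (y k i) (y l j).

End QMatrices.

Section Frames.
Variable R : realFieldType.

Definition q_proj_2design n d (x : 'I_n -> 'cV['H[R]]_d) :=
  (n%:R ^+ 2)^-1 * \sum_k \sum_l qip (x k *m qadj (x k)) (x l *m qadj (x l))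
    = (d%:R)^-1 /\
  (n%:R ^+ 2)^-1 * \sum_k \sum_l qip (x k *m qadj (x k)) (x l *m qadj (x l)) ^+ 2
    = 3 / (d%:R * (2 * d%:R + 1)).

(* equi-isoclinic, for the chosen orthonormal bases y k of S_k *)
Definition equi_isoclinic d n r (y : 'I_n -> 'I_r -> 'M['H[R]]_d) :=
  exists2 alpha : R, 0 <= alpha &
    forall k l : 'I_n, k != l ->
      (gram_blk y k l)^T *m gram_blk y k l = alpha%:M.

Definition tight_fusion_frame d n r (dimV : nat) (y : 'I_n -> 'I_r -> 'M['H[R]]_d) :=
  (n%:R ^+ 2)^-1 * \sum_k \sum_l \sum_i \sum_j (gram_blk y k l i j) ^+ 2
    = r%:R ^+ 2 / dimV%:R.

End Frames.

(* For unit x, w in H^d and imaginary z, u, the real inner product of the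
   rank-one matrices x z x^* and w u w^* is  Re(conj z * c * u * conj c)  with
   c = x^* w.  In coordinates of imaginary quaternions this is the bilinear form
   of the 3x3 real matrix M(c) of the map u |-> c u conj c, and M(c)^T M(c) =
   |c|^4 I since that map is |c|^2 times a rotation.  An orthonormal basis of
   S(x) is x z_i x^* for imaginary z_i whose coordinate matrix Z is orthogonal
   (taking c = x^* x = 1 above), so every Gram block is G_kl = Z_k M(c) Z_l^T
   and G_kl^T G_kl = |x_k^* x_l|^4 I.  Equiangularity makes this constant (part
   (a)); summing the traces 3 |x_k^* x_l|^4 = 3 <x_k x_k^*, x_l x_l^*>^2 and
   using the second 2-design identity gives the tight frame bound 9 / dim A_d
   (part (b)). *)
From mathcomp Require Import all_boot all_order all_algebra.
From mathcomp Require Import ring.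
Import GRing.Theory Num.Theory.
Set Implicit Arguments. Unset Strict Implicit.
Local Open Scope ring_scope.

Section QuaternionAlgebra.
Variable R : comNzRingType.
Implicit Types p q : 'H[R].

Lemma qmulE p q : p * q = qmul p q. Proof. by []. Qed.

Lemma qre_sum I (s : seq I) P (F : I -> 'H[R]) :
  qre (\sum_(i <- s | P i) F i) = \sum_(i <- s | P i) qre (F i).
Proof. by apply: (big_morph _ (fun p q : 'H[R] => erefl (qre (p + q)))). Qed.

Lemma qconj_sum I (s : seq I) P (F : I -> 'H[R]) :
  qconj (\sum_(i <- s | P i) F i) = \sum_(i <- s | P i) qconj (F i).
Proof.
have qconjD p q : qconj (p + q) = qconj p + qconj q.
  by case: p; case: q => *; rewrite !qaddE /qconj /qadd /=; congr Quat; ring.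
have qconj0 : qconj 0 = 0 :> 'H[R] by rewrite /qconj /=; congr Quat; rewrite oppr0.
exact: (big_morph _ qconjD qconj0).
Qed.

Lemma qconjM p q : qconj (p * q) = qconj q * qconj p.
Proof. by case: p; case: q => *; rewrite !qmulE /qconj /qmul /=; congr Quat; ring. Qed.

Lemma qconjK p : qconj (qconj p) = p.
Proof. by case: p => *; rewrite /qconj /=; congr Quat; ring. Qed.

Lemma qre_mulC p q : qre (p * q) = qre (q * p).
Proof. by case: p; case: q => *; rewrite !qmulE /qmul /=; ring. Qed.

End QuaternionAlgebra.

Section RankOneInnerProduct.
Variable R : comNzRingType.

Lemma rank_one_entry d (x : 'cV['H[R]]_d) (z : 'H[R]) a b :
  (x *m z%:M *m qadj x) a b = x a 0 * z * qconj (x b 0).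
Proof. by rewrite !mxE big_ord1 !mxE big_ord1 !mxE eqxx mulr1n. Qed.

Lemma qip_rank_one d (x w : 'cV['H[R]]_d) (z u : 'H[R]) :
  qip (x *m z%:M *m qadj x) (w *m u%:M *m qadj w) =
  qre (qconj z * (qadj x *m w) 0 0 * u * qconj ((qadj x *m w) 0 0)).
Proof.
rewrite /qip /mxtrace qre_sum.
have diag a : (qadj (x *m z%:M *m qadj x) *m (w *m u%:M *m qadj w)) a a
    = x a 0 * qconj z * (qadj x *m w) 0 0 * (u * qconj (w a 0)).
  rewrite mxE [(qadj x *m w) 0 0]mxE mulr_sumr mulr_suml; apply: eq_bigr => b _.
  rewrite [qadj _ _ _]mxE [_^T _ _]mxE !rank_one_entry !qconjM qconjK.
  by rewrite [qadj x _ _]mxE [_^T _ _]mxE !mulrA.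
have rotate p q r s t : qre (p * q * r * (s * t)) = qre ((q * r * s) * (t * p)).
  by rewrite -!mulrA qre_mulC !mulrA.
under eq_bigr => a _ do rewrite diag rotate.
rewrite -qre_sum -mulr_sumr; congr (qre (_ * _)).
by rewrite !mxE qconj_sum; apply: eq_bigr => b _; rewrite !mxE qconjM qconjK.
Qed.

Lemma qip_projections d (x w : 'cV['H[R]]_d) :
  qip (x *m qadj x) (w *m qadj w) = qnorm2 ((qadj x *m w) 0 0).
Proof.
have one_mx (v : 'cV['H[R]]_d) : v *m qadj v = v *m (1 : 'H[R])%:M *m qadj v.
  by rewrite mulmx1.
rewrite !one_mx qip_rank_one.
by case: ((qadj x *m w) 0 0) => *; rewrite /qnorm2 /=; ring.
Qed.

End RankOneInnerProduct.

Section ConjugationMatrix.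
Variable R : comNzRingType.

Definition imcoord (q : 'H[R]) (a : 'I_3) : R :=
  match nat_of_ord a with 0 => qi q | 1 => qj q | _ => qk q end.
Definition imunit (a : 'I_3) : 'H[R] :=
  match nat_of_ord a with 0 => Quat 0 1 0 0 | 1 => Quat 0 0 1 0 | _ => Quat 0 0 0 1 end.

Definition conj_mx (c : 'H[R]) : 'M[R]_3 :=
  \matrix_(a, b) qre (qconj (imunit a) * c * imunit b * qconj c).

Lemma conj_mxP (z u c : 'H[R]) : qre z = 0 -> qre u = 0 ->
  qre (qconj z * c * u * qconj c) = \sum_a \sum_b imcoord z a * conj_mx c a b * imcoord u b.
Proof.
case: z => z0 z1 z2 z3; case: u => u0 u1 u2 u3; case: c => c0 c1 c2 c3 /= -> ->.
by rewrite !big_ord_recr !big_ord0 /= !mxE /imcoord /imunit /=; ring.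
Qed.

Lemma conj_mx1 : conj_mx 1 = 1%:M.
Proof.
apply/matrixP => a b; rewrite !mxE /imunit /=.
by case: a => [[|[|[|a]]] Ha] //; case: b => [[|[|[|b]]] Hb] //=; ring.
Qed.

(* u |-> c u conj c is |c|^2 times a rotation of Im H. *)
Lemma conj_mx_orthogonal c : (conj_mx c)^T *m conj_mx c = (qnorm2 c ^+ 2)%:M.
Proof.
case: c => c0 c1 c2 c3.
apply/matrixP => a b; rewrite !mxE !big_ord_recr !big_ord0 /= !mxE /imunit /qnorm2 /=.
by case: a => [[|[|[|a]]] Ha] //; case: b => [[|[|[|b]]] Hb] //=; ring.
Qed.

End ConjugationMatrix.

Lemma sum_sqr_entries (R : comNzRingType) m n (A : 'M[R]_(m, n)) :
  \sum_i \sum_j A i j ^+ 2 = \tr (A^T *m A).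
Proof.
rewrite exchange_big /mxtrace; apply: eq_bigr => j _.
by rewrite mxE; apply: eq_bigr => i _; rewrite !mxE expr2.
Qed.

Section GramBlocks.
Variable R : comUnitRingType.

Definition coord_mx (z : 'I_3 -> 'H[R]) : 'M[R]_3 := \matrix_(i, a) imcoord (z i) a.

Lemma onb_coords d (x : 'cV['H[R]]_d) (y : 'I_3 -> 'M['H[R]]_d) :
  qunit x -> is_onb (Sx x) y ->
  exists z : 'I_3 -> 'H[R],
    (forall i, qre (z i) = 0 /\ y i = x *m (z i)%:M *m qadj x) /\
    coord_mx z *m (coord_mx z)^T = 1%:M.
Proof.
move=> hx [hS hO _].
have hS' i : exists z : 'H[R], qre z = 0 /\ y i = x *m z%:M *m qadj x.
  by have [z hz] := hS i; exists z.
have [z hz] := fin_all_exists hS'.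
exists z; split=> //; apply/matrixP => i j; rewrite !mxE -(hO i j).
have [hzi ->] := hz i; have [hzj ->] := hz j.
rewrite qip_rank_one (_ : (qadj x *m x) 0 0 = 1); last by rewrite hx mxE.
rewrite conj_mxP // conj_mx1; apply: eq_bigr => a _.
rewrite (bigD1 a) //= big1 => [|b /negbTE nba]; last by rewrite !mxE eq_sym nba mulr0 mul0r.
by rewrite !mxE eqxx addr0 mulr1.
Qed.

(* G_kl = Z_k M(x_k^* x_l) Z_l^T, hence G_kl^T G_kl = |x_k^* x_l|^4 I. *)
Lemma gram_blk_isoclinic n d (x : 'I_n -> 'cV['H[R]]_d) (hx : forall k, qunit (x k))
    (y : 'I_n -> 'I_3 -> 'M['H[R]]_d) (hy : forall k, is_onb (Sx (x k)) (y k)) k l :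
  (gram_blk y k l)^T *m gram_blk y k l = (qnorm2 ((qadj (x k) *m x l) 0 0) ^+ 2)%:M.
Proof.
have [zk [hzk ok]] := onb_coords (hx k) (hy k).
have [zl [hzl ol]] := onb_coords (hx l) (hy l).
set c := (qadj (x k) *m x l) 0 0.
have factor : gram_blk y k l = coord_mx zk *m conj_mx c *m (coord_mx zl)^T.
  apply/matrixP => i j; rewrite !mxE.
  have [hzi ->] := hzk i; have [hzj ->] := hzl j.
  rewrite qip_rank_one -/c conj_mxP // exchange_big; apply: eq_bigr => b _.
  by rewrite !mxE mulr_suml; apply: eq_bigr => a _; rewrite !mxE.
have okT : (coord_mx zk)^T *m coord_mx zk = 1%:M by apply: mulmx1C.
rewrite factor !trmx_mul trmxK !mulmxA -[_ *m (coord_mx zk)^T *m coord_mx zk]mulmxA okT mulmx1.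
by rewrite -[_ *m (conj_mx c)^T *m conj_mx c]mulmxA conj_mx_orthogonal mul_mx_scalar
  -scalemxAl ol scalemx1.
Qed.

End GramBlocks.

Theorem mainTheorem16 (R : realFieldType) (n d : nat)
    (x : 'I_n -> 'cV['H[R]]_d) (hx : forall k, qunit (x k))
    (y : 'I_n -> 'I_3 -> 'M['H[R]]_d)
    (hy : forall k, is_onb (Sx (x k)) (y k)) :
  (q_equiangular x -> equi_isoclinic y) /\
  (q_proj_2design x -> tight_fusion_frame (d * (2 * d + 1)) y).
Proof.
have isoclinic := gram_blk_isoclinic hx hy.
split.
  case=> c hc; exists (c ^+ 2); first exact: sqr_ge0.
  by move=> k l hkl; rewrite isoclinic hc.
case=> _ design2; rewrite /tight_fusion_frame.
have frob k l : \sum_i \sum_j gram_blk y k l i j ^+ 2 =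
    (qip (x k *m qadj (x k)) (x l *m qadj (x l)) ^+ 2) *+ 3.
  by rewrite sum_sqr_entries isoclinic mxtrace_scalar qip_projections.
under eq_bigr => k _ do under eq_bigr => l _ do rewrite frob.
under eq_bigr => k _ do rewrite sumrMnl.
rewrite sumrMnl mulrnAr design2 natrM natrD natrM -mulr_natr; ring.
Qed.
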